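(* In the model and protocol $\mathrm{OciorABA}$ described in the context, with $n\ge 3t+1$, if all honest nodes input the same message $w$ and some honest node outputs a vector $v$ from the APVA instance, then $v[j]\neq 0$ for every $j\in[1:n]\setminus\mathcal F$.
   Context: Model: there are $n$ nodes $\mathrm{Node}_1,\dots,\mathrm{Node}_n$ in an asynchronous network (every message sent between honest nodes is eventually delivered, with arbitrary adversarial delay). An adaptive adversary may corrupt at most $t$ nodes in total; $\mathcal F\subseteq[1:n]$ denotes the set of dishonest nodes; $n\ge 3t+1$. The symbol $\bot$ denotes ''missing''; for a vector $v\in\{0,1,\bot\}^n$ let $\mathcal M(v)=\{j\in[1:n]: v[j]\neq\bot\}$. Primitives used as black boxes: (RBC) For each $j\in[1:n]$ a reliable broadcast instance $\mathrm{RBC}_j$ with leader $\mathrm{Node}_j$, satisfying Consistency (two honest outputs are equal), Validity (if the leader is honest and inputs $w$, every honest node eventually outputs $w$), and Totality (if one honest node outputs a value, every honest node eventually outputs a value). (APVA) An asynchronous partial vector agreement instance: each honest $\mathrm{Node}_i$ holds an input vector $a_i\in\{0,1,\bot\}^n$, initially all $\bot$, whose entries may over time change from $\bot$ to a value in $\{0,1\}$ (and are then fixed); each node outputs at most one vector in $\{0,1,\bot\}^n$. It satisfies: Consistency (if an honest node outputs $v$, every honest node eventually outputs $v$); Validity (if an honest node outputs $v$, then for every $j$ with $v[j]\neq\bot$ some honest $\mathrm{Node}_i$ has input $a_i[j]=v[j]$, and $|\mathcal M(v)|\ge n-t$); Termination (if there is a set of at least $n-t$ positions at which all honest nodes have non-missing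 input entries, then every honest node eventually outputs a vector and terminates). (Erasure code) An $(n,t+1)$ erasure code: $\mathrm{Enc}(w)=(\mathrm{Enc}_1(w),\dots,\mathrm{Enc}_n(w))$ and $\mathrm{Dec}$ with $\mathrm{Dec}(\{\mathrm{Enc}_j(w)\}_{j\in K})=w$ for every $K\subseteq[1:n]$, $|K|=t+1$. Protocol $\mathrm{OciorABA}$, code for an honest $\mathrm{Node}_i$ with input message $w_i$: (1) Compute $(y^{(i)}_1,\dots,y^{(i)}_n)=\mathrm{Enc}(w_i)$ and input $y^{(i)}_i$ into $\mathrm{RBC}_i$ (as leader). (2) Upon delivery of $y^{(j)}_j$ from $\mathrm{RBC}_j$ (after step (1)), set $a_i[j]=1$ if $y^{(j)}_j=y^{(i)}_j$ and $a_i[j]=0$ otherwise, and pass $a_i[j]$ into APVA as the $j$-th entry of its input vector. (3) Upon APVA outputting $v$: let $S=\{j: v[j]=1\}$. If $|S|<t+1$, output a default value $\bot$ and terminate. Otherwise let $K$ be the $t+1$ smallest elements of $S$, wait for delivery of $y^{(j)}_j$ from $\mathrm{RBC}_j$ for all $j\in K$, output $\mathrm{Dec}(\{y^{(j)}_j\}_{j\in K})$ and terminate. *)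

(* Nodes are 'I_n; "missing" (bot) is None; F : {set 'I_n} is the set of
   dishonest nodes (those ever corrupted by the adaptive adversary).
   All per-node quantities are the eventual (final) values in the execution:
   None = never delivered / never set / never output. *)
From mathcomp Require Import all_boot.
Set Implicit Arguments. Unset Strict Implicit. Unset Printing Implicit Defensive.

Section Model.
Variable n : nat.
Notation node := 'I_n.

Definition nonmissing (v : {ffun node -> option bool}) : {set node} :=
  [set j | v j != None].

Definition erasure_code (M Y : Type) (t : nat) (Enc : M -> node -> Y)
    (Dec : seq (node * Y) -> M) : Prop :=
  forall (w : M) (K : seq node), uniq K -> size K = t.+1 ->
    Dec [seq (k, Enc w k) | k <- K] = w.

(* Reliable broadcast instances RBC_j, j in [1:n].
   lead_in j : the value input by Node_j as leader of RBC_j (meaningful if honest).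
   out i j   : the value output (delivered) by Node_i from RBC_j, if any. *)
Definition RBC_spec (Y : eqType) (F : {set node}) (lead_in : node -> Y)
    (out : node -> node -> option Y) : Prop :=
  [/\
      (forall j i1 i2 y1 y2, i1 \notin F -> i2 \notin F ->
         out i1 j = Some y1 -> out i2 j = Some y2 -> y1 = y2),
      (forall j i, j \notin F -> i \notin F -> out i j = Some (lead_in j))
    &
      (forall j i1 i2, i1 \notin F -> i2 \notin F ->
         out i1 j <> None -> out i2 j <> None)].

(* APVA instance.  a i : final input vector of Node_i (entries change from bot
   to a value at most once, so the final value is the value ever held);
   out i : the vector output by Node_i, if any. *)
Definition APVA_spec (t : nat) (F : {set node}) (a : node -> node -> option bool)
    (out : node -> option {ffun node -> option bool}) : Prop :=
  [/\
      (forall i v, i \notin F -> out i = Some v ->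
         forall i', i' \notin F -> out i' = Some v),
      (forall i v, i \notin F -> out i = Some v ->
         (forall j, v j != None -> exists2 i', i' \notin F & a i' j = v j)
         /\ n - t <= #|nonmissing v|)
    &
      ((exists S : {set node}, n - t <= #|S| /\
          forall j i, j \in S -> i \notin F -> a i j != None) ->
       forall i, i \notin F -> out i <> None)].

End Model.

From mathcomp Require Import all_boot.

Set Implicit Arguments.
Unset Strict Implicit.
Unset Printing Implicit Defensive.

(* Only Validity is needed: APVA traces any non-missing output entry back to an
   honest input, and an honest node's input at an honest leader j is 1, since it
   received Enc_j(w) from RBC_j and computes Enc_j(w) itself. *)

Section HonestEntries.
Variables (n : nat) (Msg Y : eqType) (Enc : Msg -> 'I_n -> Y).
Variables (F : {set 'I_n}) (win : 'I_n -> Msg) (w : Msg).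
Variables (rbc_out : 'I_n -> 'I_n -> option Y) (a : 'I_n -> 'I_n -> option bool).

Hypothesis rbc_valid : forall j i, j \notin F -> i \notin F ->
  rbc_out i j = Some (Enc (win j) j).
Hypothesis a_def : forall i j, i \notin F ->
  a i j = omap (fun y => y == Enc (win i) j) (rbc_out i j).
Hypothesis common_input : forall i, i \notin F -> win i = w.

Lemma honest_input_at_honest_leader i j :
  i \notin F -> j \notin F -> a i j = Some true.
Proof.
move=> Fi Fj.
by rewrite a_def // rbc_valid //= common_input // common_input // eqxx.
Qed.

End HonestEntries.

Lemma APVA_output_entry_honest_input n t F a apva_out i v j :
  @APVA_spec n t F a apva_out -> i \notin F -> apva_out i = Some v ->
  v j != None -> exists2 i', i' \notin F & a i' j = v j.
Proof. by case=> _ valid _ Fi out_v; have [trace _] := valid i v Fi out_v; apply: trace. Qed.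

Theorem lemma6 (n t : nat) (Msg Y : eqType)
  (Enc : Msg -> 'I_n -> Y) (Dec : seq ('I_n * Y) -> Msg)
  (F : {set 'I_n}) (win : 'I_n -> Msg) (w : Msg)
  (rbc_out : 'I_n -> 'I_n -> option Y)
  (a : 'I_n -> 'I_n -> option bool)
  (apva_out : 'I_n -> option {ffun 'I_n -> option bool}) :
  3 * t + 1 <= n ->
  #|F| <= t ->
  erasure_code t Enc Dec ->
  RBC_spec F (fun j => Enc (win j) j) rbc_out ->
  (forall i j, i \notin F ->
     a i j = omap (fun y => y == Enc (win i) j) (rbc_out i j)) ->
  APVA_spec t F a apva_out ->
  (forall i, i \notin F -> win i = w) ->
  forall i v, i \notin F -> apva_out i = Some v ->
  forall j, j \notin F -> v j <> Some false.
Proof.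
move=> _ _ _ [_ rbc_valid _] a_def apva common_input i v Fi out_v j Fj vj_false.
have [i' Fi' ai'j] : exists2 i', i' \notin F & a i' j = v j.
  by apply: APVA_output_entry_honest_input apva Fi out_v _; rewrite vj_false.
have := honest_input_at_honest_leader rbc_valid a_def common_input Fi' Fj.
by rewrite ai'j vj_false.
Qed.
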